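(* In the setting of the context (with $\rho<1$ and $\mu_l\le\mu_h$): (i) if $F(y_0)\neq0$, then $1<1/\eta_1<y_0$; (ii) $T'(1)<0$.
   Context: Fix $p,q,\mu_h,\mu_l\in(0,1)$ with $p+q+\mu_h+\mu_l=1$ and $\mu_l\le\mu_h$. For real $x$ write $\bar x=1-x$; let $\rho_h=p/\mu_h$, $\rho_l=q/\mu_l$, $\rho=\rho_h+\rho_l$, and assume $\rho<1$. Let $\Delta(y)=(p\mu_h-\bar p\bar\mu_h)^2(qy+\bar q)^2-2(p\mu_h+\bar p\bar\mu_h)(qy+\bar q)+1$, with zeros $y_0<y_1$ given by $y_{0,1}=\frac{p\mu_h+\bar p\bar\mu_h\mp2\sqrt{p\mu_h\bar p\bar\mu_h}}{(p\mu_h-\bar p\bar\mu_h)^2q}-\frac{\bar q}{q}$; $\sqrt{\Delta(y)}$ denotes the branch analytic on $\mathbb{C}\setminus[y_0,y_1]$ that is positive for real $y<y_0$. Let $F(y)=(\bar p+\mu_h-2\bar p\mu_l)qy^2+[(\bar p+\mu_h-2\bar p\mu_l)\bar q+2\bar pq\mu_l-1]y+2\bar p\bar q\mu_l$ and $T(y)=F(y)-y\sqrt{\Delta(y)}$. Let $\eta_1=\frac{(1-\mu_h\bar q-\bar p\bar q\bar\mu_l-\bar pq\mu_l)+\sqrt{(1-\mu_h\bar q-\bar p\bar q\bar\mu_l-\bar pq\mu_l)^2+4\bar p\bar q(\mu_h-\bar p\mu_l)\bar\mu_lq}}{2\bar p\bar q\mu_l}$. *)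

From Stdlib Require Import Reals Lra.
Open Scope R_scope.

Definition bar (x : R) : R := 1 - x.

Definition Delta (p q mh : R) (y : R) : R :=
  (p * mh - bar p * bar mh) ^ 2 * (q * y + bar q) ^ 2
  - 2 * (p * mh + bar p * bar mh) * (q * y + bar q) + 1.

(* the smaller zero y0 of Delta *)
Definition y0 (p q mh : R) : R :=
  (p * mh + bar p * bar mh - 2 * sqrt (p * mh * bar p * bar mh))
    / ((p * mh - bar p * bar mh) ^ 2 * q) - bar q / q.

(* the larger zero y1 of Delta *)
Definition y1 (p q mh : R) : R :=
  (p * mh + bar p * bar mh + 2 * sqrt (p * mh * bar p * bar mh))
    / ((p * mh - bar p * bar mh) ^ 2 * q) - bar q / q.

Definition Fpoly (p q mh ml : R) (y : R) : R :=
  (bar p + mh - 2 * bar p * ml) * q * y ^ 2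
  + ((bar p + mh - 2 * bar p * ml) * bar q + 2 * bar p * q * ml - 1) * y
  + 2 * bar p * bar q * ml.

(* T(y) = F(y) - y sqrt(Delta(y)), on real y < y0 where the chosen branch of
   sqrt(Delta) is the positive real square root. *)
Definition Tfun (p q mh ml : R) (y : R) : R :=
  Fpoly p q mh ml y - y * sqrt (Delta p q mh y).

Definition eta1 (p q mh ml : R) : R :=
  let A := 1 - mh * bar q - bar p * bar q * bar ml - bar p * q * ml in
  (A + sqrt (A ^ 2 + 4 * bar p * bar q * (mh - bar p * ml) * bar ml * q))
    / (2 * bar p * bar q * ml).

(* Everything rests on the identity
     F(y)^2 - y^2 Delta(y) = 4 bar p ml (y - 1) (q y + bar q) h(y),
   where h(y) = c y^2 + a y - b with b, c > 0 is the reciprocal polynomial of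
   b x^2 - a x - c, whose positive root is eta1; hence for y > 0 the sign of
   h(y) is that of y - 1/eta1.  Stability (rho < 1) says h(1) < 0, so
   1 < 1/eta1.  Delta vanishes at y0, and q y0 + bar q =
   1 / (sqrt (p mh) + sqrt (bar p bar mh))^2 > 1 by AM-GM since p < mh, so
   y0 > 1; thus F(y0) <> 0 forces h(y0) > 0, i.e. 1/eta1 < y0.  Finally
   T'(1) = 2 bar p (p ml + q mh - mh ml) / (mh - p), negative under stability. *)

From Stdlib Require Import Reals Lra Psatz.
From Coquelicot Require Import Coquelicot.
Open Scope R_scope.

Lemma stability_sign (p q mh ml : R) :
  0 < mh -> 0 < ml -> p / mh + q / ml < 1 -> p * ml + q * mh - mh * ml < 0.
Proof.
  intros hmh hml hrho.
  replace (p * ml + q * mh - mh * ml) with ((p / mh + q / ml - 1) * (mh * ml))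
    by (field; lra).
  apply Rmult_neg_pos; nra.
Qed.

Definition pos_root (a b c : R) : R := (a + sqrt (a ^ 2 + 4 * b * c)) / (2 * b).

Section PositiveRoot.

Variables a b c : R.
Hypotheses (hb : 0 < b) (hc : 0 < c).

Let disc_sqrt :
  sqrt (a ^ 2 + 4 * b * c) * sqrt (a ^ 2 + 4 * b * c) = a ^ 2 + 4 * b * c.
Proof. apply sqrt_sqrt; nra. Qed.

Lemma pos_root_pos : 0 < pos_root a b c.
Proof.
  pose proof (sqrt_pos (a ^ 2 + 4 * b * c)).
  assert (0 < a + sqrt (a ^ 2 + 4 * b * c)) by nra.
  unfold pos_root; apply Rdiv_lt_0_compat; lra.
Qed.

Lemma pos_root_eq : b * pos_root a b c ^ 2 - a * pos_root a b c - c = 0.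
Proof.
  unfold pos_root.
  replace (b * ((a + sqrt (a ^ 2 + 4 * b * c)) / (2 * b)) ^ 2
           - a * ((a + sqrt (a ^ 2 + 4 * b * c)) / (2 * b)) - c)
    with ((sqrt (a ^ 2 + 4 * b * c) * sqrt (a ^ 2 + 4 * b * c)
           - (a ^ 2 + 4 * b * c)) / (4 * b)) by (field; lra).
  rewrite disc_sqrt; field; lra.
Qed.

(* Roots of [c y^2 + a y - b] are the reciprocals of those of [b x^2 - a x - c]. *)
Lemma pos_root_factor (y : R) :
  pos_root a b c ^ 2 * (c * y ^ 2 + a * y - b)
  = (pos_root a b c * y - 1) * (c * pos_root a b c * y + b * pos_root a b c ^ 2).
Proof.
  pose proof pos_root_eq as heq; revert heq.
  set (e := pos_root a b c); intros heq.
  replace (e ^ 2 * (c * y ^ 2 + a * y - b))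
    with ((e * y - 1) * (c * e * y + b * e ^ 2) - e * y * (b * e ^ 2 - a * e - c))
    by ring.
  rewrite heq; ring.
Qed.

Let second_factor_pos (y : R) :
  0 < y -> 0 < c * pos_root a b c * y + b * pos_root a b c ^ 2.
Proof.
  intros hy; pose proof pos_root_pos as he.
  assert (0 < c * pos_root a b c * y)
    by (apply Rmult_lt_0_compat; [apply Rmult_lt_0_compat|]; lra).
  assert (0 < b * pos_root a b c ^ 2) by (apply Rmult_lt_0_compat; [|apply pow_lt]; lra).
  lra.
Qed.

Lemma inv_pos_root_lt (y : R) :
  0 < y -> 0 < c * y ^ 2 + a * y - b -> / pos_root a b c < y.
Proof.
  intros hy hpos; pose proof pos_root_pos as he.
  assert (hgt : 1 < pos_root a b c * y).
  { pose proof (second_factor_pos y hy).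
    assert (0 < pos_root a b c ^ 2 * (c * y ^ 2 + a * y - b))
      by (apply Rmult_lt_0_compat; [apply pow_lt|]; lra).
    rewrite pos_root_factor in *; nra. }
  apply (Rmult_lt_reg_l (pos_root a b c)); [exact he|].
  rewrite Rinv_r; lra.
Qed.

Lemma lt_inv_pos_root (y : R) :
  0 < y -> c * y ^ 2 + a * y - b < 0 -> y < / pos_root a b c.
Proof.
  intros hy hneg; pose proof pos_root_pos as he.
  assert (hlt : pos_root a b c * y < 1).
  { pose proof (second_factor_pos y hy).
    assert (pos_root a b c ^ 2 * (c * y ^ 2 + a * y - b) < 0)
      by (apply Rmult_pos_neg; [apply pow_lt|]; lra).
    rewrite pos_root_factor in *; nra. }
  apply (Rmult_lt_reg_l (pos_root a b c)); [exact he|].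
  rewrite Rinv_r; lra.
Qed.

End PositiveRoot.

Section SmallerZero.

Variables p q mh : R.
Hypotheses (hp : 0 < p) (hmh : 0 < mh) (hpmh : p + mh < 1) (hq : 0 < q).

Let u := p * mh + bar p * bar mh.
Let r := sqrt (p * mh * bar p * bar mh).

Let r_sq : r * r = p * mh * bar p * bar mh.
Proof.
  apply sqrt_sqrt; unfold bar.
  repeat apply Rmult_le_pos; lra.
Qed.

Let r_nonneg : 0 <= r.
Proof. apply sqrt_pos. Qed.

Let u_pos : 0 < u.
Proof. unfold u, bar; nra. Qed.

(* [u -+ 2 r = (sqrt (p mh) -+ sqrt (bar p bar mh))^2]. *)
Let u_sq_sub : (p * mh - bar p * bar mh) ^ 2 = (u - 2 * r) * (u + 2 * r).
Proof.
  replace ((u - 2 * r) * (u + 2 * r)) with (u * u - 4 * (r * r)) by ring.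
  rewrite r_sq; unfold u; ring.
Qed.

Let u_sub_pos : 0 < u - 2 * r.
Proof.
  assert (0 < (p * mh - bar p * bar mh) ^ 2).
  { replace (p * mh - bar p * bar mh) with (p + mh - 1) by (unfold bar; ring).
    apply pow2_gt_0; lra. }
  nra.
Qed.

Let y0_affine : q * y0 p q mh + bar q = / (u + 2 * r).
Proof.
  unfold y0; fold u r; rewrite u_sq_sub.
  field; split; lra.
Qed.

Lemma Delta_y0 : Delta p q mh (y0 p q mh) = 0.
Proof.
  unfold Delta; rewrite y0_affine, u_sq_sub; fold u.
  field; lra.
Qed.

(* AM-GM: [u + 2 r < 1] unless [p = mh]. *)
Lemma one_lt_y0 : p <> mh -> 1 < y0 p q mh.
Proof.
  intros hne.
  assert (hsum : 0 < 1 - u - 2 * r).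
  { assert ((1 - u - 2 * r) * (1 - u + 2 * r) = (mh - p) ^ 2).
    { replace ((1 - u - 2 * r) * (1 - u + 2 * r)) with ((1 - u) ^ 2 - 4 * (r * r))
        by ring.
      rewrite r_sq; unfold u, bar; ring. }
    assert (0 < (mh - p) ^ 2) by (apply pow2_gt_0; lra).
    assert (0 < 1 - u) by (unfold u, bar; nra).
    nra. }
  assert (hz : 1 < / (u + 2 * r)).
  { apply (Rmult_lt_reg_l (u + 2 * r)); [lra|].
    rewrite Rinv_r; lra. }
  pose proof y0_affine; unfold bar in *; nra.
Qed.

End SmallerZero.

(* [h y = eta_c y^2 + eta_a y - eta_b]. *)
Definition eta_a (p q mh ml : R) : R :=
  1 - mh * bar q - bar p * bar q * bar ml - bar p * q * ml.
Definition eta_b (p q ml : R) : R := bar p * bar q * ml.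
Definition eta_c (p q mh ml : R) : R := (mh - bar p * ml) * bar ml * q / ml.

Lemma eta1_pos_root (p q mh ml : R) :
  ml <> 0 ->
  eta1 p q mh ml = pos_root (eta_a p q mh ml) (eta_b p q ml) (eta_c p q mh ml).
Proof.
  intros hml; unfold eta1, pos_root, eta_a, eta_b, eta_c; cbv zeta.
  replace (4 * (bar p * bar q * ml) * ((mh - bar p * ml) * bar ml * q / ml))
    with (4 * bar p * bar q * (mh - bar p * ml) * bar ml * q) by (field; exact hml).
  f_equal; ring.
Qed.

Lemma eta_b_pos (p q ml : R) :
  0 < p < 1 -> 0 < q < 1 -> 0 < ml -> 0 < eta_b p q ml.
Proof.
  intros hp hq hml; unfold eta_b, bar.
  repeat apply Rmult_lt_0_compat; lra.
Qed.

(* The only place where [ml <= mh] is needed. *)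
Lemma eta_c_pos (p q mh ml : R) :
  0 < p -> 0 < q -> 0 < ml < 1 -> ml <= mh -> 0 < eta_c p q mh ml.
Proof.
  intros hp hq hml hmlh; unfold eta_c, bar.
  apply Rdiv_lt_0_compat; [|lra].
  repeat apply Rmult_lt_0_compat; nra.
Qed.

Lemma Fpoly_sq_sub_Delta (p q mh ml y : R) :
  p + q + mh + ml = 1 -> ml <> 0 ->
  Fpoly p q mh ml y ^ 2 - y ^ 2 * Delta p q mh y
  = 4 * bar p * ml * (y - 1) * (q * y + bar q)
    * (eta_c p q mh ml * y ^ 2 + eta_a p q mh ml * y - eta_b p q ml).
Proof.
  intros hsum hml; replace mh with (1 - p - q - ml) by lra.
  unfold Fpoly, Delta, eta_a, eta_b, eta_c, bar; field; exact hml.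
Qed.

Lemma eta_quad_at_1 (p q mh ml : R) :
  p + q + mh + ml = 1 -> ml <> 0 ->
  eta_c p q mh ml * 1 ^ 2 + eta_a p q mh ml * 1 - eta_b p q ml
  = (p * ml + q * mh - mh * ml) / ml.
Proof.
  intros hsum hml; replace mh with (1 - p - q - ml) by lra.
  unfold eta_a, eta_b, eta_c, bar; field; exact hml.
Qed.

Lemma Tfun_derive_at_1 (p q mh ml : R) :
  p + q + mh + ml = 1 -> p < mh ->
  derivable_pt_lim (Tfun p q mh ml) 1
    (2 * bar p * (p * ml + q * mh - mh * ml) / (mh - p)).
Proof.
  intros hsum hpm.
  apply is_derive_Reals; unfold Tfun, Fpoly, Delta; auto_derive;
    match goal with
    | |- context [sqrt ?D] => replace D with ((mh - p) ^ 2) by (unfold bar; ring)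
    | |- 0 < ?D => replace D with ((mh - p) ^ 2) by (unfold bar; ring)
    end.
  - apply pow2_gt_0; lra.
  - rewrite sqrt_pow2 by lra.
    replace mh with (1 - p - q - ml) by lra.
    unfold bar; field; lra.
Qed.

Theorem lemma4p1 (p q mh ml : R)
  (hp : 0 < p < 1) (hq : 0 < q < 1) (hmh : 0 < mh < 1) (hml : 0 < ml < 1)
  (hsum : p + q + mh + ml = 1) (hmlh : ml <= mh)
  (hrho : p / mh + q / ml < 1) :
  (Fpoly p q mh ml (y0 p q mh) <> 0 ->
     1 < / eta1 p q mh ml < y0 p q mh)
  /\
  (exists l, derivable_pt_lim (Tfun p q mh ml) 1 l /\ l < 0).
Proof.
  pose proof (stability_sign p q mh ml (proj1 hmh) (proj1 hml) hrho) as hstab.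
  assert (hpm : p < mh) by nra.
  assert (hml0 : ml <> 0) by lra.
  split.
  - intros hF.
    pose proof (eta_b_pos p q ml hp hq (proj1 hml)) as hb.
    pose proof (eta_c_pos p q mh ml (proj1 hp) (proj1 hq) hml hmlh) as hc.
    assert (hy0 : 1 < y0 p q mh) by (apply one_lt_y0; lra).
    rewrite eta1_pos_root by exact hml0; split.
    + apply lt_inv_pos_root; try lra.
      rewrite eta_quad_at_1 by assumption; apply Rdiv_neg_pos; lra.
    + apply inv_pos_root_lt; try lra.
      pose proof (Fpoly_sq_sub_Delta p q mh ml (y0 p q mh) hsum hml0) as hid.
      rewrite Delta_y0 in hid by lra.
      assert (hfactor : 0 < 4 * bar p * ml * (y0 p q mh - 1) * (q * y0 p q mh + bar q))
        by (unfold bar; repeat apply Rmult_lt_0_compat; nra).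
      assert (0 < Fpoly p q mh ml (y0 p q mh) ^ 2) by (apply pow2_gt_0; exact hF).
      apply (Rmult_lt_reg_l _ _ _ hfactor); lra.
  - eexists; split; [apply Tfun_derive_at_1; lra|].
    apply Rdiv_neg_pos; [unfold bar; nra | lra].
Qed.
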